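(* Fix $n\ge2$ and a value $W$ of the fuzzy size. Among all fuzzy graphs $\Gamma$ on $n$ vertices with $\mathrm{ew}(\Gamma)=W$, the ones maximizing $\sigma^*(\Gamma)$ are precisely the fuzzy single-edge graphs: those consisting of one fuzzy edge of membership $W$ and $n-2$ isolated vertices (all other edge memberships zero).
   Context: A fuzzy graph $\Gamma=(V,\nu,\mu)$ consists of a finite vertex set $V$ with $|V|=n$, a map $\nu:V\to[0,1]$, and a symmetric map $\mu:V\times V\to[0,1]$ with $\mu(u,v)\le\min(\nu(u),\nu(v))$. The fuzzy degree is $d_\Gamma(v)=\sum_{u\ne v}\mu(v,u)$, the fuzzy size is $\mathrm{ew}(\Gamma)=\sum_{\{u,v\},u\ne v}\mu(u,v)$, $\lambda=2\,\mathrm{ew}(\Gamma)/n$, and the fuzzy sigma index is $\sigma^*(\Gamma)=\frac1n\sum_{v}(d_\Gamma(v)-\lambda)^2$. *)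

From HB Require Import structures.
From mathcomp Require Import all_boot all_order all_algebra.
Set Implicit Arguments. Unset Strict Implicit. Unset Printing Implicit Defensive.
Import Order.TTheory GRing.Theory Num.Theory.
Local Open Scope ring_scope.

Section Fuzzy.
Variables (R : realFieldType) (n : nat).

Definition fuzzy_graph (nu : 'I_n -> R) (mu : 'I_n -> 'I_n -> R) : Prop :=
  [/\ forall v, 0 <= nu v <= 1,
      forall u v, 0 <= mu u v <= 1,
      forall u v, mu u v = mu v u &
      forall u v, mu u v <= Num.min (nu u) (nu v)].

Definition fdeg (mu : 'I_n -> 'I_n -> R) (v : 'I_n) : R :=
  \sum_(u < n | u != v) mu v u.

Definition fsize (mu : 'I_n -> 'I_n -> R) : R :=
  \sum_(u < n) \sum_(v < n | (u < v)%N) mu u v.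

Definition flambda (mu : 'I_n -> 'I_n -> R) : R := 2 * fsize mu / n%:R.

Definition fsigma (mu : 'I_n -> 'I_n -> R) : R :=
  n%:R^-1 * \sum_(v < n) (fdeg mu v - flambda mu) ^+ 2.

Definition single_edge (W : R) (mu : 'I_n -> 'I_n -> R) : Prop :=
  exists a b : 'I_n, [/\ a != b, mu a b = W &
    forall u v, u != v -> ~ ((u == a) && (v == b) || (u == b) && (v == a)) ->
      mu u v = 0].

End Fuzzy.

From mathcomp Require Import all_boot all_order all_algebra.
From mathcomp Require Import ring lra.
Import Order.TTheory GRing.Theory Num.Theory.
Local Open Scope ring_scope.
Set Implicit Arguments. Unset Strict Implicit.

(* Write W for the fuzzy size. The degrees sum to 2W, and 2W = 2 d(v) + (twice
   the weight of the edges avoiding v), so 0 <= d(v) <= W. Hence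
   sum_v d(v)^2 = 2W^2 - sum_v d(v) (W - d(v)) <= 2W^2, and since
   n sigma* = sum_v d(v)^2 - 4W^2/n, maximizing sigma* at fixed W amounts to
   making every d(v) (W - d(v)) vanish, i.e. every degree is 0 or W. A vertex
   of degree W carries all the weight, so the two ends of any nonzero edge
   carry it all: the graph is a single edge of membership W. The single edge
   itself is a fuzzy graph of size W (this needs 0 <= W <= 1), so the maximum
   is attained. *)

Lemma sum_sqr_dev (R : comPzRingType) (n : nat) (f : 'I_n -> R) (l : R) :
  \sum_v (f v - l) ^+ 2 = \sum_v f v ^+ 2 - 2 * l * \sum_v f v + n%:R * l ^+ 2.
Proof.
rewrite (eq_bigr (fun v => (f v ^+ 2 - 2 * l * f v) + l ^+ 2)); last by move=> v _; ring.
by rewrite big_split /= sumrB -mulr_sumr sumr_const card_ord !mulr_natl.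
Qed.

Section FuzzyDegrees.
Variables (R : realFieldType) (n : nat) (mu : 'I_n -> 'I_n -> R).
Hypothesis mu_sym : forall u v, mu u v = mu v u.
Hypothesis mu_ge0 : forall u v, 0 <= mu u v.

Lemma sum_fdeg : \sum_v fdeg mu v = 2 * fsize mu.
Proof.
have split_lt v : fdeg mu v =
    \sum_(u < n | (v < u)%N) mu v u + \sum_(u < n | (u < v)%N) mu v u.
  rewrite /fdeg (bigID (fun u : 'I_n => (v < u)%N)) /=.
  by congr (_ + _); apply: eq_bigl => u; rewrite neq_ltn; case: ltngtP.
have lower_upper : \sum_(v < n) \sum_(u < n | (u < v)%N) mu v u = fsize mu.
  rewrite /fsize; under eq_bigr => v _ do rewrite big_mkcond.
  rewrite exchange_big /=; apply: eq_bigr => u _.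
  by rewrite [RHS]big_mkcond; apply: eq_bigr => v _; rewrite mu_sym.
by rewrite (eq_bigr _ (fun v _ => split_lt v)) big_split /= lower_upper -mulr2n mulr_natl.
Qed.

Definition fweight_off (v : 'I_n) : R :=
  \sum_(x | x != v) \sum_(y | (y != x) && (y != v)) mu x y.

Lemma fweight_off_ge0 v : 0 <= fweight_off v.
Proof. by do 2!apply: sumr_ge0 => ? _. Qed.

Lemma fsize_fdeg_off v : 2 * fsize mu = 2 * fdeg mu v + fweight_off v.
Proof.
rewrite -sum_fdeg (bigD1 v) //= /fweight_off.
rewrite (eq_bigr (fun x => mu x v + \sum_(y | (y != x) && (y != v)) mu x y)); last first.
  by move=> x xv; rewrite /fdeg (bigD1 v) //= eq_sym.
rewrite big_split /=.
have -> : \sum_(x < n | x != v) mu x v = fdeg mu v.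
  by apply: eq_bigr => x _; rewrite mu_sym.
by rewrite addrA -mulr2n mulr_natl.
Qed.

Lemma fdeg_ge0 v : 0 <= fdeg mu v.
Proof. exact: sumr_ge0. Qed.

Lemma fdeg_le_fsize v : fdeg mu v <= fsize mu.
Proof. by have := fsize_fdeg_off v; have := fweight_off_ge0 v; lra. Qed.

Lemma fweight_off_eq0 v x y :
  fweight_off v = 0 -> x != v -> y != v -> x != y -> mu x y = 0.
Proof.
move=> off0 xv yv xy.
have row0 := psumr_eq0P (fun x _ => sumr_ge0 _ (fun y _ => mu_ge0 x y)) off0 xv.
by apply: (psumr_eq0P (fun y _ => mu_ge0 x y) row0); rewrite yv eq_sym xy.
Qed.

Lemma fsize_ge0 : 0 <= fsize mu.
Proof. by do 2!apply: sumr_ge0 => ? _. Qed.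

Definition fdefect : R := \sum_v fdeg mu v * (fsize mu - fdeg mu v).

Lemma fdefect_term_ge0 v : 0 <= fdeg mu v * (fsize mu - fdeg mu v).
Proof. by rewrite mulr_ge0 ?fdeg_ge0 // subr_ge0 fdeg_le_fsize. Qed.

Lemma fdefect_ge0 : 0 <= fdefect.
Proof. by apply: sumr_ge0 => v _; apply: fdefect_term_ge0. Qed.

Lemma sum_fdeg_sqr : \sum_v fdeg mu v ^+ 2 = 2 * fsize mu ^+ 2 - fdefect.
Proof.
rewrite /fdefect [in RHS](eq_bigr (fun v => fdeg mu v * fsize mu - fdeg mu v ^+ 2)).
  by rewrite sumrB -mulr_suml sum_fdeg; ring.
by move=> v _; ring.
Qed.

Lemma fsigmaE : (0 < n)%N ->
  fsigma mu = n%:R^-1 * (2 * fsize mu ^+ 2 - fdefect - 4 * fsize mu ^+ 2 / n%:R).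
Proof.
move=> n_gt0; have n_neq0 : n%:R != 0 :> R by rewrite pnatr_eq0 -lt0n.
rewrite /fsigma sum_sqr_dev sum_fdeg sum_fdeg_sqr /flambda.
by congr (_ * _); field.
Qed.

Definition on_edge (a b u v : 'I_n) : bool :=
  (u == a) && (v == b) || (u == b) && (v == a).

Definition edge_supported (a b : 'I_n) : Prop :=
  forall u v, u != v -> ~ on_edge a b u v -> mu u v = 0.

Section SingleEdge.
Variables (a b : 'I_n).
Hypotheses (neq_ab : a != b) (supp_ab : edge_supported a b).

Lemma fdeg_edge_supported v :
  fdeg mu v = if (v == a) || (v == b) then mu a b else 0.
Proof.
have off_edge u w : u != w -> w != a -> w != b -> mu u w = 0.
  by move=> uw wa wb; apply: supp_ab; rewrite // /on_edge (negbTE wa) (negbTE wb) !andbF.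
have [->|va] /= := eqVneq v a.
  rewrite /fdeg (bigD1 b) 1?eq_sym //= big1 ?addr0 // => u /andP[ua ub].
  by rewrite off_edge // eq_sym.
have [->|vb] /= := eqVneq v b.
  rewrite /fdeg (bigD1 a) //= mu_sym big1 ?addr0 // => u /andP[ub ua].
  by rewrite off_edge // eq_sym.
by rewrite /fdeg big1 // => u uv; rewrite mu_sym off_edge.
Qed.

Lemma fsize_edge_supported : fsize mu = mu a b.
Proof.
have off0 : fweight_off a = 0.
  apply: big1 => x xa; apply: big1 => y /andP[yx ya]; apply: supp_ab.
    by rewrite eq_sym.
  by rewrite /on_edge (negbTE xa) (negbTE ya) !andbF.
have := fsize_fdeg_off a; rewrite off0 fdeg_edge_supported eqxx /=; lra.
Qed.

Lemma fdefect_edge_supported : fdefect = 0.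
Proof.
apply: big1 => v _; rewrite fdeg_edge_supported fsize_edge_supported.
by case: ifP => _; rewrite ?subrr ?mulr0 ?mul0r.
Qed.

End SingleEdge.

Lemma edge_supported_off (a b : 'I_n) : a != b ->
  fweight_off a = 0 -> fweight_off b = 0 -> edge_supported a b.
Proof.
move=> ab off_a off_b u v uv not_ab.
have [eua|ua] := eqVneq u a.
  apply: (fweight_off_eq0 off_b) => //; first by rewrite eua.
  by apply/eqP => evb; apply: not_ab; rewrite /on_edge eua evb !eqxx.
have [eva|va] := eqVneq v a; last exact: (fweight_off_eq0 off_a).
apply: (fweight_off_eq0 off_b) => //; last by rewrite eva.
by apply/eqP => eub; apply: not_ab; rewrite /on_edge eva eub !eqxx orbT.
Qed.

(* A vertex of positive degree has degree W, so it lies on every edge. *)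
Lemma fdefect_eq0_off x y :
  fdefect = 0 -> x != y -> mu x y != 0 -> fweight_off x = 0.
Proof.
move=> defect0 xy mxy.
have deg_x : mu x y <= fdeg mu x.
  by rewrite /fdeg (bigD1 y) 1?eq_sym //= lerDl sumr_ge0.
have mxy_gt0 : 0 < mu x y by rewrite lt_def mxy mu_ge0.
have := psumr_eq0P (fun v _ => fdefect_term_ge0 v) defect0 (i := x) isT.
move/eqP; rewrite mulf_eq0 subr_eq0.
case/orP=> /eqP deg_eq; first by move: deg_x mxy_gt0; rewrite deg_eq; lra.
by have := fsize_fdeg_off x; have := fweight_off_ge0 x; rewrite deg_eq; lra.
Qed.

Lemma fdefect_eq0_single_edge :
  (1 < n)%N -> fdefect = 0 -> single_edge (fsize mu) mu.
Proof.
move=> n_gt1 defect0.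
suff [a [b [ab supp]]] : exists a b, a != b /\ edge_supported a b.
  exists a, b; split; [exact: ab | by rewrite (fsize_edge_supported ab supp) | exact: supp].
have [/existsP[x /existsP[y /andP[xy mxy]]] | /existsPn no_edge] :=
  boolP [exists x, exists y, (x != y) && (mu x y != 0)].
  exists x, y; split; first exact: xy.
  apply: edge_supported_off; first exact: xy.
    exact: fdefect_eq0_off defect0 xy mxy.
  have yx : y != x by rewrite eq_sym.
  have myx : mu y x != 0 by rewrite mu_sym.
  exact: fdefect_eq0_off defect0 yx myx.
exists (Ordinal (ltnW n_gt1)), (Ordinal n_gt1); split; first by [].
move=> u v uv _.
by move/existsPn/(_ v): (no_edge u); rewrite negb_and uv negbK => /eqP.
Qed.

End FuzzyDegrees.

Lemma fuzzy_graph_sym (R : realFieldType) (n : nat) nu (mu : 'I_n -> 'I_n -> R) :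
  fuzzy_graph nu mu -> forall u v, mu u v = mu v u.
Proof. by case. Qed.

Lemma fuzzy_graph_ge0 (R : realFieldType) (n : nat) nu (mu : 'I_n -> 'I_n -> R) :
  fuzzy_graph nu mu -> forall u v, 0 <= mu u v.
Proof. by case=> _ mu01 _ _ u v; case/andP: (mu01 u v). Qed.

Lemma fsigma_le_fdefect (R : realFieldType) (n : nat) (mu mu' : 'I_n -> 'I_n -> R) :
  (0 < n)%N -> (forall u v, mu u v = mu v u) -> (forall u v, mu' u v = mu' v u) ->
  fsize mu' = fsize mu -> (fsigma mu' <= fsigma mu) = (fdefect mu <= fdefect mu').
Proof.
move=> n_gt0 mu_sym mu'_sym size_eq.
rewrite (fsigmaE mu_sym n_gt0) (fsigmaE mu'_sym n_gt0) size_eq ler_pM2l ?invr_gt0 ?ltr0n //.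
by apply/idP/idP; lra.
Qed.

Definition edge_graph (R : realFieldType) (n : nat) (a b : 'I_n) (W : R) :
  'I_n -> 'I_n -> R := fun u v => if on_edge a b u v then W else 0.

Section EdgeGraph.
Variables (R : realFieldType) (n : nat) (a b : 'I_n) (W : R).

Lemma edge_graph_sym u v : edge_graph a b W u v = edge_graph a b W v u.
Proof. by rewrite /edge_graph /on_edge orbC andbC [(v == b) && _]andbC. Qed.

Lemma edge_graph_supported : edge_supported (edge_graph a b W) a b.
Proof. by move=> u v _; rewrite /edge_graph; case: ifP. Qed.

Lemma fuzzy_edge_graph : 0 <= W <= 1 -> fuzzy_graph (fun=> 1) (edge_graph a b W).
Proof.
case/andP=> W_ge0 W_le1; split=> [v|u v|u v|u v]; rewrite ?ler01 ?lexx //.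
- by rewrite /edge_graph; case: ifP; rewrite ?W_ge0 ?W_le1 ?lexx ?ler01.
- exact: edge_graph_sym.
- by rewrite minxx /edge_graph; case: ifP; rewrite ?W_le1 ?ler01.
Qed.

Lemma fsize_edge_graph : a != b -> fsize (edge_graph a b W) = W.
Proof.
move=> ab; rewrite (fsize_edge_supported edge_graph_sym ab edge_graph_supported).
by rewrite /edge_graph /on_edge !eqxx.
Qed.

End EdgeGraph.

Theorem corollary3p3 (R : realFieldType) (n : nat) (W : R) :
  (2 <= n)%N -> W <= 1 ->
  forall (nu : 'I_n -> R) (mu : 'I_n -> 'I_n -> R),
    fuzzy_graph nu mu -> fsize mu = W ->
    ((forall (nu' : 'I_n -> R) (mu' : 'I_n -> 'I_n -> R),
        fuzzy_graph nu' mu' -> fsize mu' = W -> fsigma mu' <= fsigma mu)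
     <-> single_edge W mu).
Proof.
move=> n_gt1 W_le1 nu mu fuzzy_mu size_mu.
have mu_sym := fuzzy_graph_sym fuzzy_mu; have mu_ge0 := fuzzy_graph_ge0 fuzzy_mu.
have compare (nu' : 'I_n -> R) (mu' : 'I_n -> 'I_n -> R) :
    fuzzy_graph nu' mu' -> fsize mu' = W ->
    (fsigma mu' <= fsigma mu) = (fdefect mu <= fdefect mu').
  move=> fuzzy' size'; rewrite fsigma_le_fdefect ?size' ?size_mu ?(ltnW n_gt1) //.
  exact: fuzzy_graph_sym fuzzy'.
split=> [max_mu | [a [b [ab _ supp]]] nu' mu' fuzzy' size'].
- pose a : 'I_n := Ordinal (ltnW n_gt1); pose b : 'I_n := Ordinal n_gt1.
  have ab : a != b by [].
  have W01 : 0 <= W <= 1 by rewrite -{1}size_mu fsize_ge0.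
  have fuzzy_e := fuzzy_edge_graph a b W01.
  have size_e : fsize (edge_graph a b W) = W by apply: fsize_edge_graph.
  have defect_e : fdefect (edge_graph a b W) = 0.
    apply: (fdefect_edge_supported (edge_graph_sym a b W) ab); exact: edge_graph_supported.
  have := max_mu _ _ fuzzy_e size_e; rewrite (compare _ _ fuzzy_e size_e) defect_e => defect_le0.
  rewrite -size_mu; apply: fdefect_eq0_single_edge => //.
  by apply/eqP; rewrite eq_le defect_le0 fdefect_ge0.
- rewrite (compare _ _ fuzzy' size') (fdefect_edge_supported mu_sym ab supp).
  exact: fdefect_ge0 (fuzzy_graph_sym fuzzy') (fuzzy_graph_ge0 fuzzy').
Qed.
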